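(* Let $r_o>0$, $\tau>0$, $\kappa>0$, $\alpha>0$ and $\beta\in(0,1)$ be constants. For $m<0$, let $u_m:[0,\infty)\to[r_o,\infty)$ be the solution of $$u_m(0)=r_o,\qquad u_m'(s)=\left(1-\frac{2m}{u_m(s)}+\kappa^2u_m^2(s)\right)^{1/2},$$ and set $$k=\tau\left(1-\frac{2m}{r_o}+\kappa^2r_o^2\right)^{-1/2}.$$ (i) For every $m<0$ with $k^2<\beta$, there exists a positive constant $A_o$ such that $$(\beta-k^2)+\left[3\kappa^2(1-k^2)-\tfrac12\alpha A_o^{-2}\right]u_m^2(A_ok)=0.$$ (ii) The set of all such $A_o$ is bounded from above and bounded away from zero as $m\to-\infty$. *)

From Stdlib Require Import Reals.
Open Scope R_scope.

Definition ode_rhs (kappa m x : R) : R :=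
  sqrt (1 - 2 * m / x + kappa ^ 2 * x ^ 2).

Definition is_um (ro kappa m : R) (v : R -> R) : Prop :=
  v 0 = ro /\
  (forall s, 0 <= s -> ro <= v s) /\
  (forall s, 0 < s -> derivable_pt_lim v s (ode_rhs kappa m (v s))) /\
  (forall eps, 0 < eps -> exists delta, 0 < delta /\
     forall s, 0 <= s < delta -> Rabs (v s - ro) < eps).

Definition kcoef (ro tau kappa m : R) : R :=
  tau / sqrt (1 - 2 * m / ro + kappa ^ 2 * ro ^ 2).

Definition Ao_eq (ro tau kappa alpha beta m : R) (v : R -> R) (A : R) : Prop :=
  let k := kcoef ro tau kappa m in
  (beta - k ^ 2) + (3 * kappa ^ 2 * (1 - k ^ 2) - / 2 * alpha / A ^ 2) * (v (A * k)) ^ 2 = 0.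

(* Multiplying the equation by 2 A^2 shows that it says
     A^2 = alpha U / (2 (beta - k^2) + 6 kappa^2 (1 - k^2) U),   U = u_m(A k)^2 >= r_o^2.
   Whatever m, the right-hand side lies in the window
     [alpha r_o^2 / (2 beta + 6 kappa^2 r_o^2), alpha / (6 kappa^2 (1 - beta))),
   and the left-hand side of the equation is negative for A^2 below the window and positive
   above it.  Continuity and the intermediate value theorem give a root (i), and the window
   bounds every root uniformly in m (ii). *)

From Stdlib Require Import Reals Ranalysis5 Lra Psatz.
From Coquelicot Require Import Coquelicot.
Open Scope R_scope.

Section Balance.

Variables kappa alpha beta ro : R.
Hypotheses (kappa_gt0 : 0 < kappa) (alpha_gt0 : 0 < alpha) (beta_gt0 : 0 < beta)
  (beta_lt1 : beta < 1) (ro_gt0 : 0 < ro).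

Definition balance (K U A : R) : R :=
  (beta - K) + (3 * kappa ^ 2 * (1 - K) - / 2 * alpha / A ^ 2) * U.

Definition balance_lo : R := alpha * ro ^ 2 / (2 * beta + 6 * kappa ^ 2 * ro ^ 2).

Definition balance_hi : R := alpha / (6 * kappa ^ 2 * (1 - beta)).

Lemma balance_lo_gt0 : 0 < balance_lo.
Proof.
  assert (0 < ro ^ 2) by (apply pow_lt; assumption).
  assert (0 < kappa ^ 2) by (apply pow_lt; assumption).
  unfold balance_lo; apply Rdiv_lt_0_compat; nra.
Qed.

Lemma balance_hi_gt0 : 0 < balance_hi.
Proof.
  unfold balance_hi; apply Rdiv_lt_0_compat; [assumption|].
  assert (0 < kappa ^ 2) by (apply pow_lt; assumption). nra.
Qed.

Lemma balance_scaled (K U A : R) : A <> 0 ->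
  2 * A ^ 2 * balance K U A
  = A ^ 2 * (2 * (beta - K) + 6 * kappa ^ 2 * (1 - K) * U) - alpha * U.
Proof. intros HA; unfold balance; field; exact HA. Qed.

Lemma balance_lt0 (K U A : R) : 0 <= K < beta -> ro ^ 2 <= U -> 0 < A ->
  A ^ 2 < balance_lo -> balance K U A < 0.
Proof.
  intros HK HU HA Hlo.
  assert (Hk2 : 0 < kappa ^ 2) by (apply pow_lt; assumption).
  assert (HA2 : 0 < A ^ 2) by (apply pow_lt; assumption).
  assert (Hro2 : 0 < ro ^ 2) by (apply pow_lt; assumption).
  assert (HU0 : 0 < U) by lra.
  assert (HS : 0 < 2 * beta + 6 * kappa ^ 2 * ro ^ 2) by nra.
  enough (2 * A ^ 2 * balance K U A < 0) by nra.
  rewrite balance_scaled by lra.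
  assert (Hlo' : A ^ 2 * (2 * beta + 6 * kappa ^ 2 * ro ^ 2) < alpha * ro ^ 2).
  { replace (alpha * ro ^ 2) with (balance_lo * (2 * beta + 6 * kappa ^ 2 * ro ^ 2))
      by (unfold balance_lo; field; lra).
    apply Rmult_lt_compat_r; lra. }
  (* the bound alpha U / (2 beta + 6 kappa^2 U) on A^2 increases with U *)
  assert (Hmono : A ^ 2 * (2 * beta + 6 * kappa ^ 2 * U) * ro ^ 2
                  <= A ^ 2 * (2 * beta + 6 * kappa ^ 2 * ro ^ 2) * U).
  { assert (0 <= 2 * beta * A ^ 2 * (U - ro ^ 2)) by (apply Rmult_le_pos; nra). lra. }
  assert (Hbound : A ^ 2 * (2 * beta + 6 * kappa ^ 2 * U) < alpha * U).
  { apply (Rmult_lt_reg_r (ro ^ 2)); [assumption|].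
    pose proof (Rmult_lt_compat_r U _ _ HU0 Hlo'); lra. }
  assert (0 <= A ^ 2 * K * (2 + 6 * kappa ^ 2 * U)).
  { repeat apply Rmult_le_pos; nra. }
  lra.
Qed.

Lemma balance_gt0 (K U A : R) : K < beta -> 0 < U -> balance_hi <= A ^ 2 ->
  0 < balance K U A.
Proof.
  intros HK HU Hhi.
  assert (Hk2 : 0 < kappa ^ 2) by (apply pow_lt; assumption).
  assert (HD : 0 < 6 * kappa ^ 2 * (1 - beta)) by nra.
  assert (HA2 : 0 < A ^ 2) by (pose proof balance_hi_gt0; lra).
  assert (Hhi' : alpha <= A ^ 2 * (6 * kappa ^ 2 * (1 - beta))).
  { replace alpha with (balance_hi * (6 * kappa ^ 2 * (1 - beta)))
      by (unfold balance_hi; field; lra).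
    apply Rmult_le_compat_r; lra. }
  enough (0 < 2 * A ^ 2 * balance K U A) by nra.
  rewrite balance_scaled by (intros ->; simpl in HA2; lra).
  assert (A ^ 2 * (6 * kappa ^ 2 * (1 - beta)) * U
          <= A ^ 2 * (6 * kappa ^ 2 * (1 - K)) * U).
  { apply Rmult_le_compat_r; [lra|]. apply Rmult_le_compat_l; nra. }
  assert (0 < 2 * A ^ 2 * (beta - K)) by nra.
  nra.
Qed.

Lemma balance_root_bounds (K U A : R) : 0 <= K < beta -> ro ^ 2 <= U -> 0 < A ->
  balance K U A = 0 -> sqrt balance_lo <= A <= sqrt balance_hi.
Proof.
  intros HK HU HA Hroot.
  rewrite <- (sqrt_pow2 A) by lra.
  split; apply sqrt_le_1_alt.
  - apply Rnot_lt_le; intros Hlo.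
    pose proof (balance_lt0 K U A HK HU HA Hlo); lra.
  - apply Rlt_le, Rnot_le_lt; intros Hhi.
    assert (HU0 : 0 < U) by (pose proof (pow_lt ro 2 ro_gt0); lra).
    pose proof (balance_gt0 K U A (proj2 HK) HU0 Hhi); lra.
Qed.

Lemma continuity_pt_balance_comp (K k : R) (v : R -> R) (x : R) :
  0 < k -> 0 < x -> (forall s, 0 < s -> ex_derive v s) ->
  continuity_pt (fun A => balance K (v (A * k) ^ 2) A) x.
Proof.
  intros Hk Hx Hv.
  apply derivable_continuous_pt, ex_derive_Reals_0; unfold balance.
  auto_derive; repeat split; [nra|apply Hv; nra].
Qed.

Lemma balance_comp_has_root (K k : R) (v : R -> R) :
  0 <= K < beta -> 0 < k -> (forall s, 0 < s -> ex_derive v s) ->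
  (forall s, 0 < s -> ro ^ 2 <= v s ^ 2) ->
  exists A, 0 < A /\ balance K (v (A * k) ^ 2) A = 0.
Proof.
  intros HK Hk Hv Hro.
  pose (f := fun A => balance K (v (A * k) ^ 2) A).
  pose proof balance_lo_gt0 as Hlo.
  pose proof balance_hi_gt0 as Hhi.
  pose proof (pow_lt ro 2 ro_gt0) as Hro2.
  pose (a := balance_lo / (1 + balance_lo)).
  pose (b := 1 + balance_hi).
  assert (Ha : 0 < a) by (unfold a; apply Rdiv_lt_0_compat; lra).
  assert (Ha_lo : a < balance_lo /\ a < 1).
  { unfold a; split; apply (Rmult_lt_reg_r (1 + balance_lo)); try lra;
      unfold Rdiv; rewrite Rmult_assoc, Rinv_l; nra. }
  assert (Hfa : f a < 0).
  { apply balance_lt0; [assumption|apply Hro; nra|assumption|].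
    simpl; nra. }
  assert (Hfb : 0 < f b).
  { assert (0 < b * k) by (unfold b; nra).
    apply balance_gt0; [lra|pose proof (Hro (b * k)); lra|unfold b; simpl; nra]. }
  destruct (IVT_interv f a b) as [z [[Haz Hzb] Hfz]]; try assumption.
  - intros x Hx; apply continuity_pt_balance_comp; auto; lra.
  - unfold b; lra.
  - exists z; split; [lra|exact Hfz].
Qed.

End Balance.

Lemma kcoef_gt0 (ro tau kappa m : R) : 0 < ro -> 0 < tau -> m < 0 ->
  0 < kcoef ro tau kappa m.
Proof.
  intros Hro Htau Hm.
  unfold kcoef; apply Rdiv_lt_0_compat; [assumption|apply sqrt_lt_R0].
  assert (0 < - 2 * m / ro) by (apply Rdiv_lt_0_compat; lra).
  assert (0 <= kappa ^ 2 * ro ^ 2) by (apply Rmult_le_pos; apply pow2_ge_0).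
  unfold Rdiv in *; lra.
Qed.

Lemma is_um_sq_ge (ro kappa m : R) (v : R -> R) : 0 < ro -> is_um ro kappa m v ->
  forall s, 0 <= s -> ro ^ 2 <= v s ^ 2.
Proof.
  intros Hro [_ [Hge _]] s Hs.
  pose proof (Hge s Hs); apply pow_incr; lra.
Qed.

Lemma is_um_ex_derive (ro kappa m : R) (v : R -> R) : is_um ro kappa m v ->
  forall s, 0 < s -> ex_derive v s.
Proof.
  intros [_ [_ [Hd _]]] s Hs.
  exists (ode_rhs kappa m (v s)); apply is_derive_Reals, Hd, Hs.
Qed.

Theorem lemma4p1 (ro tau kappa alpha beta : R) (u : R -> R -> R) :
  0 < ro -> 0 < tau -> 0 < kappa -> 0 < alpha -> 0 < beta < 1 ->
  (forall m, m < 0 -> is_um ro kappa m (u m)) ->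
  (* (i) *)
  (forall m, m < 0 -> (kcoef ro tau kappa m) ^ 2 < beta ->
     exists Ao, 0 < Ao /\ Ao_eq ro tau kappa alpha beta m (u m) Ao) /\
  (* (ii) *)
  (exists M0 C1 C2, 0 < C1 /\
     forall m, m < M0 -> m < 0 -> (kcoef ro tau kappa m) ^ 2 < beta ->
       forall Ao, 0 < Ao -> Ao_eq ro tau kappa alpha beta m (u m) Ao ->
         C1 <= Ao <= C2).
Proof.
  intros Hro Htau Hkappa Halpha [Hbeta Hbeta1] Hu.
  assert (Hu_sq : forall m s, m < 0 -> 0 <= s -> ro ^ 2 <= u m s ^ 2)
    by (intros m s Hm; apply (is_um_sq_ge ro kappa m), Hu; assumption).
  split.
  - intros m Hm HK.
    apply (balance_comp_has_root kappa alpha beta ro); try assumption.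
    + split; [apply pow2_ge_0|assumption].
    + apply kcoef_gt0; assumption.
    + apply (is_um_ex_derive ro kappa m), Hu, Hm.
    + intros s Hs; apply Hu_sq; lra.
  - exists 0, (sqrt (balance_lo kappa alpha beta ro)), (sqrt (balance_hi kappa alpha beta)).
    split; [apply sqrt_lt_R0, balance_lo_gt0; assumption|].
    intros m _ Hm HK A HA HAo.
    pose proof (kcoef_gt0 ro tau kappa m Hro Htau Hm).
    apply (balance_root_bounds kappa alpha beta ro) with
      (K := kcoef ro tau kappa m ^ 2) (U := u m (A * kcoef ro tau kappa m) ^ 2);
      try assumption.
    + split; [apply pow2_ge_0|assumption].
    + apply Hu_sq; nra.
Qed.
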